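(* For every $k\in\mathbb Z$, the series $\Psi^\pm_k:=R_\pm^k\Psi_0^\pm$ are given by \[ \Psi_k^+(x)=\gamma\sum_{j\ge0}x^{j+k}h_j(\beta^{-1}{\bf s})\rho_{j+k-1},\qquad \Psi_k^-(x)=\sum_{j\ge0}x^{j+k}h_j(-\beta^{-1}{\bf s})\rho^{-1}_{-j-k}. \]
   Context: Let $G(z)=1+\sum_{i\ge1}g_iz^i$ be a formal power series, $\beta,\gamma$ formal parameters, ${\bf s}=(s_1,s_2,\dots)$. $h_j({\bf s})$ are the complete symmetric functions in the variables $s_i$ via $\sum_jh_j({\bf s})z^j=\exp(\sum_is_iz^i)$, and $\pm\beta^{-1}{\bf s}=(\pm\beta^{-1}s_1,\pm\beta^{-1}s_2,\dots)$. With $r_\lambda=\prod_{(i,j)\in\lambda}G((j-i)\beta)$ (boxes $(i,j)$, $i$ = row, $j$ = column) and Schur functions written in ${\bf t}$ with $p_i=it_i$, let $\tau({\bf t})=\sum_\lambda\gamma^{|\lambda|}r_\lambda s_\lambda({\bf t})s_\lambda(\beta^{-1}{\bf s})$ and $\Psi_0^\pm(x)=\tau(\pm[x])$, $[x]=(x,x^2/2,\dots)$. Set $\rho_0=1$, $\rho_j=\gamma^j\prod_{i=1}^jG(i\beta)$ and $\rho_{-j}=\gamma^{-j}\prod_{i=0}^{j-1}G(-i\beta)^{-1}$ for $j\ge1$. $D=x\,d/dx$, and $R_\pm=\gamma xG(\pm\beta D)$ acts on formal Laurent series in $x$ (coefficients in $\mathbb Q[g_1,g_2,\dots][{\bf s}][\gamma,\gamma^{-1}]((\beta))$)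 by $R_\pm(x^j)=\gamma G(\pm\beta j)x^{j+1}$; it is invertible since each $G(\pm\beta j)$ is invertible, and $R_\pm^k$ for $k<0$ means the inverse power. *)

From HB Require Import structures.
From mathcomp Require Import all_boot all_order all_algebra.
Set Implicit Arguments. Unset Strict Implicit. Unset Printing Implicit Defensive.
Import Order.TTheory GRing.Theory Num.Theory.
Local Open Scope ring_scope.

Section Defs.
Variable C : comUnitRingType.

(* Complete homogeneous symmetric functions h_n(u) in the "times"
   u = (u 1, u 2, ...) (u 0 is ignored), defined by
   sum_n h_n z^n = exp(sum_i u_i z^i), i.e. via the equivalent recursion
   h_0 = 1,  n h_n = sum_{i=1}^n i u_i h_{n-i}  (obtained from H' = U' H). *)
Fixpoint hseq (V : lalgType C) (u : nat -> V) (n : nat) : seq V :=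
  match n with
  | 0 => [:: 1]
  | m.+1 => let l := hseq u m in
      rcons l (((m.+1)%:R : C)^-1 *:
               \sum_(i < m.+1) ((i.+1)%:R * u i.+1 * l`_(m - i)))
  end.

Definition hcomp (V : lalgType C) (u : nat -> V) (n : nat) : V := (hseq u n)`_n.

Definition hz (V : lalgType C) (u : nat -> V) (k : int) : V :=
  match k with Posz n => hcomp u n | Negz _ => 0 end.

(* Schur function s_lambda(u) by the Jacobi-Trudi formula
   det (h_{lambda_i - i + j}(u))_{i,j}, lambda given as a padded n-tuple. *)
Definition schur (V : lalgType C) (u : nat -> V) (n : nat) (l : 'I_n -> nat) : V :=
  \det (\matrix_(i < n, j < n) hz u ((l i)%:Z - (i : nat)%:Z + (j : nat)%:Z)).

Definition is_part (n : nat) (l : 'I_n -> nat) : bool :=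
  [forall i : 'I_n, forall j : 'I_n, (i <= j)%N ==> (l j <= l i)%N].

(* Gb m stands for G(m * beta). r_lambda = prod over boxes (i,j) of G((j-i) beta) *)
Definition rlam (Gb : int -> C) (n : nat) (l : 'I_n -> nat) : C :=
  \prod_(i < n) \prod_(j < l i) Gb ((j : nat)%:Z - (i : nat)%:Z).

Definition times_x (pm : bool) (i : nat) : {poly C} :=
  ((if pm then 1 else -1) * (i%:R : C)^-1) *: 'X^i.

Definition hC (u : nat -> C) (k : int) : C := @hz C^o u k.
Definition schurC (u : nat -> C) (n : nat) (l : 'I_n -> nat) : C := @schur C^o u n l.

(* Formal Laurent series in x are represented by their coefficient functions
   int -> C.  Psi0 pm = tau(+-[x]): coefficient of x^n is the (finite) sum of
   the x^n-coefficients of the terms gamma^|l| r_l s_l(+-[x]) s_l(beta^-1 s)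
   over all partitions l with |l| <= n (terms with |l| > n lie in x^{|l|}C[x]). *)
Definition Psi0 (gam bet : C) (Gb : int -> C) (s : nat -> C) (pm : bool) : int -> C :=
  fun N => match N with
  | Negz _ => 0
  | Posz n =>
      \sum_(l : {ffun 'I_n -> 'I_n.+1} |
              is_part (fun i => nat_of_ord (l i)) && (\sum_(i < n) nat_of_ord (l i) <= n)%N)
        gam ^+ (\sum_(i < n) nat_of_ord (l i))%N
        * rlam Gb (fun i => nat_of_ord (l i))
        * (schur (times_x pm) (fun i => nat_of_ord (l i)))`_n
        * schurC (fun i => bet^-1 * s i) (fun i => nat_of_ord (l i))
  end.

Definition rho (gam : C) (Gb : int -> C) (k : int) : C :=
  match k with
  | Posz j => gam ^+ j * \prod_(1 <= i < j.+1) Gb (i%:Z)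
  | Negz m => gam ^- m.+1 * \prod_(0 <= i < m.+1) (Gb (- (i%:Z)))^-1
  end.

(* R_+ (pm = true) and R_- (pm = false): R_pm (x^j) = gam G(+- beta j) x^(j+1) *)
Definition Rop (gam : C) (Gb : int -> C) (pm : bool) (f : int -> C) : int -> C :=
  fun n => gam * Gb ((if pm then 1 else -1) * (n - 1)) * f (n - 1).

Definition Rinv (gam : C) (Gb : int -> C) (pm : bool) (f : int -> C) : int -> C :=
  fun n => (gam * Gb ((if pm then 1 else -1) * n))^-1 * f (n + 1).

Definition Rpow (gam : C) (Gb : int -> C) (pm : bool) (k : int) (f : int -> C) : int -> C :=
  match k with
  | Posz m => iter m (Rop gam Gb pm) f
  | Negz m => iter m.+1 (Rinv gam Gb pm) f
  end.

End Defs.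

(* h_m(+[x]) = x^m and h_m(-[x]) is the coefficient of z^m in 1 - xz, so the
   Jacobi-Trudi determinant s_l(+-[x]) is x^|l| times a scalar determinant,
   which vanishes unless l is a single row (sign +) or a single column (sign -).
   The x^n-coefficient of Psi_0^+ is therefore gam^n r_(n) h_n(v) with
   v = beta^-1 s, and that of Psi_0^- is gam^n r_(1^n) e_n(v), where
   e_n(v) = (-1)^n h_n(-v) is a cofactor of the Toeplitz matrix (h_(j-i)(v)),
   whose inverse is (h_(j-i)(-v)).  Both coefficients have the form
   h_n(+-v) w(n) with w(n) = gam G(+-(n-1) beta) w(n-1), so R_+- and its
   inverse shift the index of h by one: R_+-^k Psi_0^+- has coefficients
   h_(n-k)(+-v) w(n). *)

From HB Require Import structures.
From mathcomp Require Import all_boot all_order all_algebra zify ring.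
Set Implicit Arguments. Unset Strict Implicit. Unset Printing Implicit Defensive.
Import Order.TTheory GRing.Theory Num.Theory.
Local Open Scope ring_scope.

Local Notation nat_parts l := (fun i => nat_of_ord (l i)).

Section CompleteHomogeneous.
Variables (C : comUnitRingType) (V : lalgType C) (u : nat -> V).

Lemma size_hseq m : size (hseq u m) = m.+1.
Proof. by elim: m => //= m IHm; rewrite size_rcons IHm. Qed.

Lemma nth_hseq m j : (j <= m)%N -> (hseq u m)`_j = hcomp u j.
Proof.
elim: m => [|m IHm]; first by rewrite leqn0 => /eqP ->.
rewrite leq_eqVlt => /predU1P [-> //|ltjm].
by rewrite /= nth_rcons size_hseq ltjm IHm.
Qed.

Lemma hcompS m : hcomp u m.+1 =
  ((m.+1)%:R : C)^-1 *: \sum_(i < m.+1) ((i.+1)%:R * u i.+1 * hcomp u (m - i)).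
Proof.
rewrite /hcomp /= nth_rcons size_hseq ltnn eqxx; congr (_ *: _).
by apply: eq_bigr => i _; rewrite nth_hseq // leq_subr.
Qed.
End CompleteHomogeneous.

Section TimesX.
Variable C : comUnitRingType.
Hypothesis natS_unit : forall n : nat, (n.+1)%:R \is a @GRing.unit C.

Definition hcompC (u : nat -> C) : nat -> C := @hcomp C C^o u.

Lemma hcompCS (u : nat -> C) m :
  (m.+1)%:R * hcompC u m.+1 = \sum_(i < m.+1) ((i.+1)%:R * u i.+1 * hcompC u (m - i)).
Proof. by rewrite /hcompC hcompS [_ *: _]/(_ * _) mulrA divrr // mul1r. Qed.

Lemma natr_mul_times_x pm i :
  (i.+1)%:R * times_x C pm i.+1 = (if pm then 1 else -1) *: 'X^(i.+1).
Proof.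
by rewrite /times_x mulr_natl scalerMnl -mulr_natr -mulrA mulVr // mulr1.
Qed.

Lemma hcomp_times_plus m : hcomp (times_x C true) m = 'X^m.
Proof.
elim/ltn_ind: m => [[|m]] IHm //.
rewrite hcompS (eq_bigr (fun _ => 'X^(m.+1))) => [|i _].
  by rewrite sumr_const card_ord -scaler_nat scalerA mulVr ?scale1r.
rewrite natr_mul_times_x scale1r IHm ?ltnS ?leq_subr // -exprD.
by congr (_ ^+ _); have := ltn_ord i; lia.
Qed.

Definition one_minus_coef (m : nat) : C :=
  match m with 0 => 1 | 1 => -1 | _ => 0 end.

Lemma hcomp_times_minus m : hcomp (times_x C false) m = (one_minus_coef m)%:P * 'X^m.
Proof.
elim/ltn_ind: m => [[|[|m]]] IHm; first by rewrite mul1r.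
  rewrite hcompS big_ord1 /= natr_mul_times_x invr1 scale1r mulr1.
  by rewrite polyCN polyC1 mulN1r scaleN1r.
rewrite hcompS 2!big_ord_recr /= big1 ?add0r => [|i _]; last first.
  rewrite IHm ?ltnS ?leq_subr //.
  have [j ->] : exists j, (m.+1 - i)%N = j.+2 by exists (m.+1 - i).-2; have := ltn_ord i; lia.
  by rewrite /= polyC0 mul0r mulr0.
rewrite subSnn subnn !IHm // !natr_mul_times_x /= !scaleN1r polyCN polyC1.
by rewrite !mul1r mulN1r expr0 mulr1 mulrNN -exprD addn1 addrN scaler0 mul0r.
Qed.
End TimesX.

Lemma Posz_sum (I : finType) (F : I -> nat) : Posz (\sum_i F i)%N = \sum_i (F i)%:Z.
Proof. exact: (big_morph Posz PoszD (erefl (Posz 0))). Qed.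

Definition zext (V : nmodType) (c : nat -> V) (z : int) : V :=
  match z with Posz m => c m | Negz _ => 0 end.

Lemma zext_subn (V : nmodType) (c : nat -> V) (x y : nat) :
  zext c (x%:Z - y%:Z) = if (y <= x)%N then c (x - y)%N else 0.
Proof.
case: leqP => [le_yx|lt_xy]; first by rewrite subzn.
have : x%:Z - y%:Z < 0 by rewrite subr_lt0 ltz_nat.
by case: (_ - _).
Qed.

Section Homogeneous.
Variable C : comUnitRingType.

Definition jt_matrix (c : nat -> C) n (l : 'I_n -> nat) : 'M[C]_n :=
  \matrix_(i < n, j < n) zext c ((l i)%:Z - (i : nat)%:Z + (j : nat)%:Z).

Lemma schurCE (v : nat -> C) n (l : 'I_n -> nat) :
  schurC v l = \det (jt_matrix (hcompC v) l).
Proof. by []. Qed.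

Variables (u : nat -> {poly C}) (c : nat -> C).
Hypothesis hcomp_homog : forall m, hcomp u m = (c m)%:P * 'X^m.

Lemma prod_hz_homog n (e : 'I_n -> int) (N : nat) : \sum_i e i = N%:Z ->
  \prod_i hz u (e i) = (\prod_i zext c (e i))%:P * 'X^N.
Proof.
move=> sum_e.
have [i0 ei0_neg|e_ge0] := pickP (fun i => e i < 0).
  rewrite (bigD1 i0) //= [in RHS](bigD1 i0) //=.
  by case: (e i0) ei0_neg => // p _; rewrite /= !mul0r.
have eE i : e i = `|e i|%N by case: (e i) (e_ge0 i).
rewrite (eq_bigr (fun i => (c `|e i|%N)%:P * 'X^(`|e i|%N))) => [|i _]; last first.
  by rewrite [e i]eE /= hcomp_homog.
rewrite big_split /= rmorph_prod prodrXr; congr (_ * _).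
  by apply: eq_bigr => i _; rewrite [e i]eE.
congr 'X^_; apply/eqP; rewrite -eqz_nat Posz_sum -sum_e.
by apply/eqP/eq_bigr => i _; rewrite -eE.
Qed.

Lemma schur_homog n (l : 'I_n -> nat) :
  schur u l = (\det (jt_matrix c l))%:P * 'X^(\sum_i l i).
Proof.
rewrite /schur /determinant rmorph_sum mulr_suml; apply: eq_bigr => s _.
rewrite rmorphM /= rmorph_sign -mulrA; congr (_ * _).
under eq_bigr do rewrite mxE.
under [in RHS]eq_bigr do rewrite mxE.
apply: prod_hz_homog; rewrite Posz_sum big_split /= sumrB.
by rewrite [in X in _ - X + _](reindex_inj (@perm.perm_inj _ s)) subrK.
Qed.
End Homogeneous.

Section SinglePartition.
Variables (C : comUnitRingType) (gam bet : C) (Gb : int -> C) (s : nat -> C).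
Variables (pm : bool) (c : nat -> C).
Hypothesis hcomp_homog : forall m, hcomp (times_x C pm) m = (c m)%:P * 'X^m.

Lemma Psi0_single_part n (l0 : {ffun 'I_n -> 'I_n.+1}) :
  is_part (nat_parts l0) -> (\sum_i l0 i)%N = n ->
  (forall l : {ffun 'I_n -> 'I_n.+1}, is_part (nat_parts l) ->
     (\sum_i l i)%N = n -> l != l0 -> \det (jt_matrix c (nat_parts l)) = 0) ->
  Psi0 gam bet Gb s pm n = gam ^+ n * rlam Gb (nat_parts l0)
    * \det (jt_matrix c (nat_parts l0)) * schurC (fun i => bet^-1 * s i) (nat_parts l0).
Proof.
move=> l0_part l0_sum det_other.
rewrite /Psi0 (bigD1 l0) /=; last by rewrite l0_part l0_sum leqnn.
rewrite (schur_homog hcomp_homog) coefCM coefXn l0_sum eqxx mulr1 big1 ?addr0 //.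
move=> l /andP[/andP[l_part _] l_ne].
rewrite (schur_homog hcomp_homog) coefCM coefXn.
have [l_sum|] := eqVneq (\sum_i nat_of_ord (l i))%N n; last by rewrite !mulr0 mul0r.
by rewrite det_other // mul0r !mulr0 mul0r.
Qed.
End SinglePartition.

Lemma is_partP n (l : 'I_n -> nat) :
  is_part l -> forall i j : 'I_n, (i <= j)%N -> (l j <= l i)%N.
Proof. by move=> /forallP l_part i j; move: (l_part i) => /forallP /(_ j) /implyP. Qed.

Section RowPartition.
Variable C : comUnitRingType.

Definition row_part n : {ffun 'I_n -> 'I_n.+1} :=
  [ffun i : 'I_n => if (i : nat) == 0%N then ord_max else ord0].

Lemma row_partE n (i : 'I_n) : row_part n i = (if (i : nat) == 0%N then n else 0%N) :> nat.
Proof. by rewrite ffunE; case: ifP. Qed.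

Lemma is_part_row n : is_part (nat_parts (row_part n)).
Proof.
apply/forallP => i; apply/forallP => j; apply/implyP => le_ij; rewrite !row_partE.
by case: eqP; case: eqP => // *; lia.
Qed.

Lemma sum_row_part n : (\sum_i row_part n i)%N = n.
Proof.
case: n => [|n]; first by rewrite big_ord0.
by rewrite big_ord_recl row_partE big1 ?addn0 // => i _; rewrite row_partE.
Qed.

Lemma rlam_row_part (Gb : int -> C) n :
  rlam Gb (nat_parts (row_part n)) = \prod_(j < n) Gb j%:Z.
Proof.
case: n => [|n]; first by rewrite /rlam !big_ord0.
rewrite /rlam big_ord_recl [X in _ * X]big1 => [|i _]; last by rewrite row_partE big_ord0.
by rewrite row_partE mulr1; apply: eq_bigr => j _; rewrite subr0.
Qed.

Lemma det_jt_row_part (c : nat -> C) n : c 0%N = 1 ->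
  \det (jt_matrix c (nat_parts (row_part n))) = c n.
Proof.
move=> c0; rewrite -det_tr det_trig => [|]; last first.
  apply/is_trig_mxP => i j lt_ij; rewrite !mxE row_partE.
  have -> : ((j : nat) == 0%N) = false by apply/negbTE; lia.
  have : (0 - (j : nat)%:Z + (i : nat)%:Z < 0) by lia.
  by case: (_ - _ + _).
case: n => [|n]; first by rewrite big_ord0.
rewrite big_ord_recl big1 => [|i _]; first by rewrite !mxE row_partE /= !addn0 mulr1.
by rewrite !mxE row_partE /= (_ : _ - _ + _ = 0%Z) //; lia.
Qed.

(* With all h_m equal to 1, a second nonempty row makes the first two rows of
   the Jacobi-Trudi matrix equal. *)
Lemma det_jt_ones_other n (l : {ffun 'I_n -> 'I_n.+1}) :
  is_part (nat_parts l) -> (\sum_i l i)%N = n -> l != row_part n ->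
  \det (jt_matrix (fun _ => 1 : C) (nat_parts l)) = 0.
Proof.
move=> l_part l_sum l_ne.
have [i /andP[i_gt0 li_gt0]|l_row] :=
    pickP (fun i : 'I_n => (0 < i)%N && (0 < l i)%N); last first.
  case/negP: l_ne; apply/eqP/ffunP => i; apply/val_inj; rewrite /= row_partE.
  have l_other (j : 'I_n) : (j : nat) != 0%N -> l j = 0%N :> nat.
    by move=> j_ne0; apply/eqP; move: (l_row j); rewrite lt0n j_ne0 /= lt0n => /negbFE.
  case: eqP => [i0|/eqP]; last exact: l_other.
  move: l_sum; rewrite (bigD1 i) //= big1 ?addn0 // => j ne_ji; apply: l_other.
  by apply: contra ne_ji => /eqP j0; apply/eqP/val_inj; rewrite /= j0 i0.
have lt1n : (1 < n)%N by have := ltn_ord i; lia.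
pose i1 : 'I_n := Ordinal lt1n.
have l1_gt0 : (0 < l i1)%N.
  exact: leq_trans li_gt0 (is_partP l_part (i := i1) (j := i) i_gt0).
apply: (@determinant_alternate _ _ _ (Ordinal (ltnW lt1n)) i1) => // j.
have zext1 z : 0 <= z -> zext (fun _ => 1 : C) z = 1 by case: z.
by rewrite !mxE !zext1 //=; lia.
Qed.
End RowPartition.

Section ColumnPartition.
Variable C : comUnitRingType.

Definition col_part n : {ffun 'I_n -> 'I_n.+1} := [ffun => inord 1].

Lemma col_partE n (i : 'I_n) : col_part n i = 1%N :> nat.
Proof. by rewrite ffunE inordK //; have := ltn_ord i; lia. Qed.

Lemma is_part_col n : is_part (nat_parts (col_part n)).
Proof. by apply/forallP => i; apply/forallP => j; rewrite !col_partE leqnn implybT. Qed.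

Lemma sum_col_part n : (\sum_i col_part n i)%N = n.
Proof.
by rewrite (eq_bigr (fun _ => 1%N)) ?sum1_card ?card_ord // => i _; rewrite col_partE.
Qed.

Lemma rlam_col_part (Gb : int -> C) n :
  rlam Gb (nat_parts (col_part n)) = \prod_(i < n) Gb (- (i : nat)%:Z).
Proof. by apply: eq_bigr => i _; rewrite col_partE big_ord1 add0r. Qed.

Variable c : nat -> C.
Hypothesis c_ge2 : forall m, c m.+2 = 0.

Lemma zext_ge2 z : 2 <= z -> zext c z = 0.
Proof. by case: z => [[|[|m]]|] //= _; apply: c_ge2. Qed.

Lemma det_jt_col_part n : \det (jt_matrix c (nat_parts (col_part n))) = c 1%N ^+ n.
Proof.
rewrite det_trig => [|]; last first.
  by apply/is_trig_mxP => i j lt_ij; rewrite mxE col_partE zext_ge2 //; lia.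
rewrite (eq_bigr (fun _ => c 1%N)) ?prodr_const ?card_ord // => i _.
by rewrite mxE col_partE (_ : _ - _ + _ = 1%Z) //; lia.
Qed.

(* A part of size at least 2 makes the first row of the Jacobi-Trudi matrix vanish. *)
Lemma det_jt_col_other n (l : {ffun 'I_n -> 'I_n.+1}) :
  is_part (nat_parts l) -> (\sum_i l i)%N = n -> l != col_part n ->
  \det (jt_matrix c (nat_parts l)) = 0.
Proof.
move=> l_part l_sum l_ne.
have [i le2li|l_le1] := pickP (fun i => (2 <= l i)%N); last first.
  case/negP: l_ne; apply/eqP/ffunP => i; apply/val_inj; rewrite /= col_partE.
  have {}l_le1 j : (l j <= 1)%N by rewrite leqNgt (l_le1 j).
  have : (\sum_j (1 - l j) == 0)%N.
    rewrite -(eqn_add2l n) addn0 -{1}l_sum -big_split /=.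
    by rewrite (eq_bigr (fun _ => 1%N)) ?sum1_card ?card_ord // => j _; rewrite subnKC.
  by rewrite sum_nat_eq0 => /forallP /(_ i) /eqP; have := l_le1 i; lia.
have lt0n : (0 < n)%N by have := ltn_ord i; lia.
pose i0 : 'I_n := Ordinal lt0n.
have le_li_l0 : (l i <= l i0)%N by exact: (is_partP l_part (i := i0) (j := i)).
rewrite (expand_det_row _ i0) big1 // => j _.
by rewrite mxE zext_ge2 ?mul0r //=; lia.
Qed.
End ColumnPartition.

Section InverseSeries.
Variable C : comUnitRingType.
Hypothesis natS_unit : forall n : nat, (n.+1)%:R \is a @GRing.unit C.

Lemma hcompC_X_deriv (v : nat -> C) N m : (m < N)%N ->
  ('X * (\poly_(j < N) hcompC v j)^`())`_m =
  (\poly_(j < N) (j%:R * v j) * \poly_(j < N) hcompC v j)`_m.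
Proof.
move=> lt_mN; rewrite coefXM coefM.
case: m lt_mN => [|m] lt_mN.
  by rewrite eqxx big_ord1 coef_poly lt_mN mulr0n !mul0r.
rewrite /= coef_deriv coef_poly lt_mN big_ord_recl coef_poly /= mulr0n !mul0r.
rewrite if_same mul0r add0r -mulr_natl hcompCS //; apply: eq_bigr => i _.
have lt_iN : (i.+1 < N)%N by have := ltn_ord i; lia.
have lt_miN : (m - i < N)%N by have := ltn_ord i; lia.
by rewrite !coef_poly /bump leq0n add1n lt_iN subSS lt_miN.
Qed.

Lemma trunc_coefMr (p q r : {poly C}) N :
  (forall m, (m < N)%N -> p`_m = q`_m) ->
  forall m, (m < N)%N -> (p * r)`_m = (q * r)`_m.
Proof.
move=> eq_pq m lt_mN; rewrite !coefM; apply: eq_bigr => j _.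
by rewrite eq_pq // (leq_ltn_trans _ lt_mN) // -ltnS.
Qed.

(* Truncations A, B of H(v) and H(-v) satisfy zA' = WA and zB' = -WB below
   degree N, so the coefficient of z^(n+1) in z(AB)' vanishes. *)
Lemma hcompC_conv_opp (v : nat -> C) n :
  \sum_(j < n.+1) hcompC v j * hcompC (fun i => - v i) (n - j) = (n == 0%N)%:R.
Proof.
case: n => [|n]; first by rewrite big_ord1 mulr1.
set N := n.+2.
set A := \poly_(j < N) hcompC v j.
set B := \poly_(j < N) hcompC (fun i => - v i) j.
set W := \poly_(j < N) (j%:R * v j).
have derA := @hcompC_X_deriv v N.
have derB m : (m < N)%N -> ('X * B^`())`_m = (- W * B)`_m.
  have -> : - W = \poly_(j < N) (j%:R * - v j).
    by apply/polyP => i; rewrite coefN !coef_poly; case: ifP; rewrite ?oppr0 ?mulrN.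
  exact: hcompC_X_deriv.
have : ('X * (A * B)^`())`_n.+1 = 0.
  have -> : 'X * (A * B)^`() = ('X * A^`()) * B + ('X * B^`()) * A.
    by rewrite derivM; ring.
  rewrite coefD (trunc_coefMr B derA) // (trunc_coefMr A derB) // -coefD.
  by rewrite (_ : W * A * B + - W * B * A = 0) ?coef0 //; ring.
rewrite coefXM /= coef_deriv => /(congr1 (fun x => x / n.+1%:R)).
rewrite -[_ *+ _]mulr_natr mulrK // mul0r => coefAB.
rewrite -[RHS]coefAB coefM; apply: eq_bigr => j _; have := ltn_ord j.
by rewrite !coef_poly /N => lt_jn; rewrite lt_jn (_ : (n.+1 - j < n.+2)%N) //; lia.
Qed.

Definition toeplitz_h (v : nat -> C) N : 'M[C]_N :=
  \matrix_(i < N, j < N) (if (i <= j)%N then hcompC v (j - i) else 0).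

Lemma toeplitz_h_mul_opp (v : nat -> C) N :
  toeplitz_h v N *m toeplitz_h (fun i => - v i) N = 1%:M.
Proof.
apply/matrixP => i k; rewrite !mxE.
pose F j := (if (i <= j)%N then hcompC v (j - i) else 0) *
            (if (j <= k)%N then hcompC (fun i => - v i) (k - j) else 0).
rewrite (eq_bigr (fun j : 'I_N => F j)) => [|j _]; last by rewrite !mxE.
rewrite -(big_mkord xpredT F) (big_cat_nat (leq0n i) (ltnW (ltn_ord i))) /=.
rewrite big_nat_cond big1 ?add0r => [|j /andP[/andP[_ lt_ji] _]]; last first.
  by rewrite /F leqNgt lt_ji mul0r.
have [lt_ki|le_ik] := ltnP k i.
  rewrite big_nat_cond big1 => [|j /andP[/andP[le_ij _] _]].
    by rewrite (_ : (i == k) = false) //; apply/eqP => /(congr1 val) /=; lia.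
  by rewrite /F le_ij (_ : (j <= k)%N = false) ?mulr0 //; apply/negbTE; lia.
rewrite (big_cat_nat (leqW le_ik) (ltn_ord k)) /=.
rewrite [X in _ + X]big_nat_cond [X in _ + X]big1 ?addr0 => [|j]; last first.
  by move=> /andP[/andP[lt_kj _] _]; rewrite /F (leqNgt j k) lt_kj mulr0.
rewrite -{1}(add0n i) big_addn subSn // big_mkord.
rewrite (eq_bigr (fun t : 'I_(k - i).+1 =>
           hcompC v t * hcompC (fun i => - v i) (k - i - t))) => [|t _]; last first.
  have := ltn_ord t; rewrite /F leq_addl addnK => lt_t.
  by rewrite ifT; [congr (_ * hcompC _ _)|]; lia.
rewrite hcompC_conv_opp // subn_eq0; congr (_ %:R).
by rewrite eq_sym -val_eqE /= eqn_leq le_ik andbT.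
Qed.

Lemma det_toeplitz_h (v : nat -> C) N : \det (toeplitz_h v N) = 1.
Proof.
rewrite -det_tr det_trig => [|]; last first.
  by apply/is_trig_mxP => i j lt_ij; rewrite !mxE leqNgt lt_ij.
by apply: big1 => i _; rewrite !mxE leqnn subnn.
Qed.

Lemma det_jt_col_hcompC (v : nat -> C) n :
  \det (jt_matrix (hcompC v) (nat_parts (col_part n))) =
  (-1) ^+ n * hcompC (fun i => - v i) n.
Proof.
set T := toeplitz_h v n.+1.
have adjT : \adj T = toeplitz_h (fun i => - v i) n.+1.
  by rewrite -[\adj T]mulmx1 -(toeplitz_h_mul_opp v) mulmxA mul_adj_mx
     det_toeplitz_h mul1mx.
have := congr1 (fun M : 'M_n.+1 => M ord0 ord_max) adjT.
rewrite /= [in RHS]mxE leq0n subn0 => <-.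
rewrite mxE /cofactor /= addn0 mulrA -exprMn mulrNN mulr1 expr1n mul1r.
congr (\det _); apply/matrixP => i j; rewrite !mxE lift_max lift0 col_partE /=.
by rewrite (_ : 1 - _ + _ = (j.+1)%:Z - (i : nat)%:Z) ?zext_subn //; lia.
Qed.
End InverseSeries.

Section Weights.
Variables (C : comUnitRingType) (gam : C) (Gb : int -> C).
Hypotheses (Gb0 : Gb 0 = 1) (Gb_unit : forall m, Gb m \is a GRing.unit).
Hypothesis gam_unit : gam \is a GRing.unit.

Lemma rho_unit m : rho gam Gb m \is a GRing.unit.
Proof.
case: m => [j|j] /=; rewrite unitrM.
  by rewrite unitrX //= unitr_prod.
by rewrite unitrV unitrX //= unitr_prod // => i _; rewrite unitrV.
Qed.

Lemma rhoE m : rho gam Gb m = gam * Gb m * rho gam Gb (m - 1).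
Proof.
case: m => [[|j]|j].
- rewrite /= expr0 big_geq // big_nat1 oppr0 Gb0 invr1 expr1 !mulr1.
  by rewrite mulrV.
- rewrite (_ : Posz j.+1 - 1 = j); last by lia.
  by rewrite /rho big_nat_recr //= exprS; ring.
- rewrite (_ : Negz j - 1 = Negz j.+1); last by rewrite !NegzE; lia.
  rewrite /rho [in RHS]big_nat_recr //= (exprS gam j.+1) invrM ?unitrX //.
  rewrite (_ : - (j.+1)%:Z = Negz j) ?NegzE //.
  set P := \prod_(0 <= i < j.+1) _.
  rewrite [RHS](_ : _ = gam / gam * (Gb (Negz j) / Gb (Negz j)) * (gam ^- j.+1 * P)).
    by rewrite !divrr // !mul1r.
  ring.
Qed.

Lemma rho0 : rho gam Gb 0 = 1.
Proof. by rewrite /= expr0 big_geq // mulr1. Qed.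

Lemma gam_rho_pred n : gam * rho gam Gb (n%:Z - 1) = gam ^+ n * \prod_(j < n) Gb j%:Z.
Proof.
elim: n => [|n IHn].
  by have := rhoE 0; rewrite rho0 Gb0 mulr1 big_ord0 mulr1 => /esym.
rewrite (_ : n.+1%:Z - 1 = n); last by lia.
by rewrite rhoE mulrCA IHn big_ord_recr exprSr /=; ring.
Qed.

Lemma rho_opp_inv n : (rho gam Gb (- n%:Z))^-1 = gam ^+ n * \prod_(i < n) Gb (- i%:Z).
Proof.
elim: n => [|n IHn]; first by rewrite oppr0 rho0 invr1 big_ord0 mulr1.
rewrite (_ : - n.+1%:Z = - n%:Z - 1); last by lia.
transitivity (gam * Gb (- n%:Z) * (rho gam Gb (- n%:Z))^-1); last first.
  by rewrite IHn big_ord_recr exprSr /=; ring.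
have gamGb_unit : gam * Gb (- n%:Z) \is a GRing.unit by rewrite unitrM gam_unit Gb_unit.
by rewrite [in RHS]rhoE invrM ?rho_unit // mulrCA mulrV ?mulr1.
Qed.
End Weights.

Section RpowWeighted.
Variables (C : comUnitRingType) (gam : C) (Gb : int -> C) (pm : bool).
Hypotheses (gam_unit : gam \is a GRing.unit) (Gb_unit : forall m, Gb m \is a GRing.unit).
Variables (H w : int -> C) (f : int -> C).
Hypothesis w_rec : forall n, w n = gam * Gb ((if pm then 1 else -1) * (n - 1)) * w (n - 1).
Hypothesis fE : forall n, f n = H n * w n.

Lemma iter_Rop m n : iter m (Rop gam Gb pm) f n = H (n - m%:Z) * w n.
Proof.
elim: m n => [|m IHm] n; first by rewrite /= subr0 fE.
rewrite iterS /Rop IHm (w_rec n) (_ : n - 1 - m%:Z = n - m.+1%:Z); last by lia.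
by ring.
Qed.

Lemma iter_Rinv m n : iter m (Rinv gam Gb pm) f n = H (n + m%:Z) * w n.
Proof.
elim: m n => [|m IHm] n; first by rewrite /= addr0 fE.
rewrite iterS /Rinv IHm (w_rec (n + 1)) addrK (_ : n + 1 + m%:Z = n + m.+1%:Z); last by lia.
set g := gam * Gb _; have g_unit : g \is a GRing.unit by rewrite unitrM gam_unit Gb_unit.
by rewrite mulrCA mulKr.
Qed.

Lemma Rpow_weighted k n : Rpow gam Gb pm k f n = H (n - k) * w n.
Proof.
case: k => m; first exact: iter_Rop.
by rewrite /Rpow iter_Rinv NegzE opprK.
Qed.
End RpowWeighted.

Section Psi0Series.
Variables (C : comUnitRingType) (gam bet : C) (Gb : int -> C) (s : nat -> C).
Hypothesis natS_unit : forall n : nat, (n.+1)%:R \is a @GRing.unit C.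
Hypotheses (Gb0 : Gb 0 = 1) (Gb_unit : forall m, Gb m \is a GRing.unit).
Hypothesis gam_unit : gam \is a GRing.unit.

Let v i := bet^-1 * s i.

Lemma Psi0_plus n :
  Psi0 gam bet Gb s true n = hC v n * (gam * rho gam Gb (n - 1)).
Proof.
case: n => n; last by rewrite /hC mul0r.
have hcomp_homog m : hcomp (times_x C true) m = (1 : C)%:P * 'X^m.
  by rewrite hcomp_times_plus // mul1r.
rewrite (Psi0_single_part _ _ _ _ hcomp_homog (is_part_row n) (sum_row_part n));
  last exact: det_jt_ones_other.
rewrite rlam_row_part det_jt_row_part // schurCE det_jt_row_part // gam_rho_pred //.
by rewrite mulr1 mulrC.
Qed.

Lemma Psi0_minus n :
  Psi0 gam bet Gb s false n = hC (fun i => - v i) n * (rho gam Gb (- n))^-1.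
Proof.
case: n => n; last by rewrite /hC mul0r.
rewrite (Psi0_single_part _ _ _ _ (hcomp_times_minus natS_unit) (is_part_col n) (sum_col_part n));
  last exact: det_jt_col_other.
rewrite rlam_col_part det_jt_col_part // schurCE (det_jt_col_hcompC natS_unit) rho_opp_inv //.
have sign2 : (-1) ^+ n * (-1) ^+ n = 1 :> C by rewrite -exprMn mulrNN mulr1 expr1n.
rewrite /hC /v /=; transitivity (hcompC (fun i => - (bet^-1 * s i)) n *
  (gam ^+ n * \prod_(i < n) Gb (- i%:Z)) * ((-1) ^+ n * (-1) ^+ n)); first ring.
by rewrite sign2 mulr1.
Qed.
End Psi0Series.

Theorem proposition5p8 (C : comUnitRingType)
  (hQ : forall n : nat, (n.+1)%:R \is a @GRing.unit C)
  (Gb : int -> C) (hG0 : Gb 0 = 1) (hGu : forall m : int, Gb m \is a GRing.unit)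
  (gam bet : C) (hgam : gam \is a GRing.unit) (hbet : bet \is a GRing.unit)
  (s : nat -> C) (k : int) :
  (forall n : int,
     Rpow gam Gb true k (Psi0 gam bet Gb s true) n =
     (if 0 <= n - k then gam * hC (fun i => bet^-1 * s i) (n - k) * rho gam Gb (n - 1)
      else 0))
  /\
  (forall n : int,
     Rpow gam Gb false k (Psi0 gam bet Gb s false) n =
     (if 0 <= n - k then hC (fun i => - (bet^-1 * s i)) (n - k) * (rho gam Gb (- n))^-1
      else 0)).
Proof.
split=> n.
  have w_rec m : gam * rho gam Gb (m - 1) =
                 gam * Gb (1 * (m - 1)) * (gam * rho gam Gb (m - 1 - 1)).
    by rewrite mul1r [in LHS](rhoE hG0 hGu hgam); ring.
  rewrite (Rpow_weighted (pm := true) hgam hGu w_rec (Psi0_plus bet s hQ hG0 hGu hgam)).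
  by case: (n - k) => p //=; rewrite ?mulr0 ?mul0r // mulrCA mulrA.
have w_rec m : (rho gam Gb (- m))^-1 =
               gam * Gb (-1 * (m - 1)) * (rho gam Gb (- (m - 1)))^-1.
  have gGb_unit : gam * Gb (- (m - 1)) \is a GRing.unit by rewrite unitrM hgam hGu.
  rewrite mulN1r [in RHS](rhoE hG0 hGu hgam) (_ : - (m - 1) - 1 = - m); last by lia.
  by rewrite invrM ?rho_unit // mulrCA mulrV ?mulr1.
rewrite (Rpow_weighted (pm := false) hgam hGu w_rec (Psi0_minus bet s hQ hG0 hGu hgam)).
by case: (n - k) => p //=; rewrite mul0r.
Qed.
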